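(* For every connected graph $G$ of order $n$, $\chi_{\mu_2}(G)\le \lceil n/2\rceil$. Moreover, this bound is sharp, i.e., there are connected graphs attaining equality.
   Context: A $u,v$-geodesic is a shortest $u,v$-path. A set $M\subseteq V(G)$ is a $2$-distance mutual-visibility set if for every two vertices $u,v\in M$ there exists a $u,v$-geodesic of length at most $2$ none of whose internal vertices lies in $M$. $\chi_{\mu_2}(G)$ is the minimum cardinality of a partition of $V(G)$ into $2$-distance mutual-visibility sets. *)

From mathcomp Require Import all_boot.
From mathcomp Require Import boolp.
Set Implicit Arguments. Unset Strict Implicit. Unset Printing Implicit Defensive.

(* A finite simple graph: vertex type T : finType, adjacency e : rel T,
   assumed symmetric and irreflexive (hypotheses in the theorem). *)

Definition connected_graph (T : finType) (e : rel T) : Prop :=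
  forall x y : T, connect e x y.

Definition is_walk (T : finType) (e : rel T) (u v : T) (p : seq T) : bool :=
  path e u p && (last u p == v).

Definition is_geodesic (T : finType) (e : rel T) (u v : T) (p : seq T) : Prop :=
  is_walk e u v p /\ forall q, is_walk e u v q -> size p <= size q.

(* internal vertices of the walk u :: p (all vertices except both ends) *)
Definition internal (T : finType) (u : T) (p : seq T) : seq T :=
  behead (belast u p).

Definition dist2_mv_set (T : finType) (e : rel T) (M : {set T}) : Prop :=
  forall u v, u \in M -> v \in M ->
    exists p, is_geodesic e u v p /\ size p <= 2 /\
              all (fun x => x \notin M) (internal u p).

Definition dist2_mv_partition (T : finType) (e : rel T) (P : {set {set T}}) : Prop :=
  partition P [set: T] /\ forall M, M \in P -> dist2_mv_set e M.

(* chi_{mu_2}(G): minimum cardinality of such a partition.  The partition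
   into singletons always qualifies and has #|T| blocks, so #|T| is a safe
   default for the minimum. *)
Definition chi_mu2 (T : finType) (e : rel T) : nat :=
  \big[minn/#|T|]_(P : {set {set T}} | `[< dist2_mv_partition e P >]) #|P|.

From mathcomp Require Import all_boot all_order zify.
From mathcomp Require boolp.
Set Implicit Arguments. Unset Strict Implicit. Unset Printing Implicit Defensive.
Import Order.TTheory.

(* Upper bound: pick a BFS tree rooted at some vertex and repeatedly remove two
   vertices at distance at most 2: a deepest vertex v together with a sibling
   of v if there is one (they see each other through their common parent),
   and otherwise together with its parent.  The remaining set is still closed
   under taking parents, so the induction goes on and produces a partition
   into pairs and at most one singleton.
   Sharpness: in a path, a 2-distance mutual-visibility set has at most two
   vertices, since the middle one of three vertices within distance 2 blocks
   the only geodesic between the other two. *)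

Section Chi.
Variables (T : finType) (e : rel T).

Lemma chi_mu2_le_card P : dist2_mv_partition e P -> chi_mu2 e <= #|P|.
Proof.
by move=> eP; rewrite /chi_mu2 -minEnat -leEnat bigmin_le_cond //; apply/boolp.asboolP.
Qed.

Lemma le_chi_mu2 m :
  m <= #|T| -> (forall P, dist2_mv_partition e P -> m <= #|P|) -> m <= chi_mu2 e.
Proof.
by move=> mT mP; rewrite /chi_mu2 -minEnat -leEnat le_bigmin // => P /boolp.asboolP/mP.
Qed.

Lemma uphalf_le_chi_mu2 :
  (forall M, dist2_mv_set e M -> #|M| <= 2) -> uphalf #|T| <= chi_mu2 e.
Proof.
move=> le2; apply: le_chi_mu2 => [|P [partP dP]]; first by rewrite leq_uphalf_double; lia.
rewrite leq_uphalf_double -cardsT (card_partition partP) -muln2 -sum_nat_const.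
by apply: leq_sum => B /dP/le2.
Qed.

End Chi.

Section Geodesics.
Variables (T : finType) (e : rel T).

Lemma geodesic_nil a : is_geodesic e a a [::].
Proof. by split=> //; rewrite /is_walk /= eqxx. Qed.

Lemma geodesic_edge a b : a != b -> e a b -> is_geodesic e a b [:: b].
Proof.
move=> ab eab; split=> [|[|c q] //]; first by rewrite /is_walk /= eab eqxx.
by rewrite /is_walk /= (negbTE ab).
Qed.

Lemma geodesic_two a w b :
  a != b -> ~~ e a b -> e a w -> e w b -> is_geodesic e a b [:: w; b].
Proof.
move=> ab neab eaw ewb; split; first by rewrite /is_walk /= eaw ewb eqxx.
case=> [|c [|d q]] //; rewrite /is_walk /= ?(negbTE ab) // andbT.
by case/andP=> eac /eqP cb; rewrite -cb eac in neab.
Qed.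

Hypotheses (esym : symmetric e) (eirr : irreflexive e).

Lemma dist2_mv_set1 x : dist2_mv_set e [set x].
Proof.
by move=> a b; rewrite !inE => /eqP-> /eqP->; exists [::]; split; first exact: geodesic_nil.
Qed.

Lemma dist2_mv_set2 u v :
  e u v \/ (exists2 w, e u w & e w v) -> dist2_mv_set e [set u; v].
Proof.
pose sees a b := exists p, is_geodesic e a b p /\ size p <= 2 /\
                           all (fun x => x \notin [set u; v]) (internal a p).
have stay x : sees x x by exists [::]; split; first exact: geodesic_nil.
have see a b : [set a; b] = [set u; v] -> a != b ->
    e a b \/ (exists2 w, e a w & e w b) -> sees a b.
  move=> abE ab near; rewrite /sees -abE; have [eab|neab] := boolP (e a b).
    by exists [:: b]; split; first exact: geodesic_edge.
  have [w eaw ewb] : exists2 w, e a w & e w b by case: near => // /(negP neab).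
  exists [:: w; b]; split; first exact: geodesic_two.
  rewrite /internal /= !inE andbT; split=> //; apply/norP.
  by split; apply/eqP=> wE; [rewrite wE eirr in eaw | rewrite wE eirr in ewb].
move=> near a b aM bM; change (sees a b); move: aM bM; rewrite !inE.
case/orP=> /eqP-> /orP[]/eqP->; try exact: stay.
- by have [<-|uv] := eqVneq u v; [exact: stay | exact: see].
- have [->|vu] := eqVneq v u; first exact: stay.
  apply: see => //; first exact: setUC.
  by case: near => [|[w ? ?]]; [left; rewrite esym | right; exists w; rewrite esym].
Qed.

End Geodesics.

Section Halving.
Variables (T : finType) (e : rel T).

Definition dist2_mv_halving (S : {set T}) : Prop :=
  exists P : {set {set T}},
    [/\ partition P S, forall B, B \in P -> dist2_mv_set e B & #|P| <= uphalf #|S|].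

Lemma dist2_mv_halving_small (S : {set T}) : #|S| <= 1 -> dist2_mv_halving S.
Proof.
case: (set_0Vmem S) => [->|[x xS]] S1.
  by exists set0; split; rewrite ?partition_set0 ?cards0 // => B; rewrite inE.
have -> : S = [set x] by apply/eqP; rewrite eq_sym eqEcard sub1set xS cards1.
exists [set [set x]]; split; last by rewrite !cards1.
- by rewrite /partition cover1 trivIset1 eqxx inE eq_sym -cards_eq0 cards1.
- by move=> B; rewrite inE => /eqP->; apply: dist2_mv_set1.
Qed.

Lemma dist2_mv_halving_add_pair (S : {set T}) a b :
  a \in S -> b \in S -> a != b -> dist2_mv_set e [set a; b] ->
  dist2_mv_halving (S :\: [set a; b]) -> dist2_mv_halving S.
Proof.
move=> aS bS ab dab [P [partP dP cardP]].
have abS : [set a; b] \subset S by rewrite subUset !sub1set aS bS.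
have cardS : #|S| = (#|S :\: [set a; b]|).+2.
  by rewrite cardsDS // cards2 ab; have := subset_leq_card abS; rewrite cards2 ab; lia.
exists ([set a; b] |: P); split.
- have -> : S = [set a; b] :|: (S :\: [set a; b]).
    by rewrite setDE setUIr setUCr setIT (setUidPr abS).
  apply: partitionU1 => //; first by rewrite -cards_eq0 cards2.
  by rewrite disjoints_subset setDE setCI setCK subsetUr.
- by move=> B; rewrite in_setU1 => /orP[/eqP->|/dP].
- by rewrite cardsU1 cardS /= -add1n leq_add ?leq_b1.
Qed.

End Halving.

Section RootedTree.
Variables (T : finType) (e : rel T) (r : T) (par : T -> T) (depth : T -> nat).
Hypotheses (esym : symmetric e) (eirr : irreflexive e).
Hypotheses (par_edge : forall x, x != r -> e x (par x))
           (depth_par : forall x, x != r -> depth x = (depth (par x)).+1).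

Definition parent_closed (S : {set T}) := forall x, x \in S -> x != r -> par x \in S.

Lemma parent_closedD (S A : {set T}) :
  parent_closed S -> (forall x, x \in S :\: A -> x != r -> par x \notin A) ->
  parent_closed (S :\: A).
Proof.
move=> clS parA x xSA xr; rewrite inE parA //.
by move: xSA; rewrite inE => /andP[_ /clS->].
Qed.

Lemma parent_closed_halving (S : {set T}) : parent_closed S -> dist2_mv_halving e S.
Proof.
elim: {S}_.+1 {-2}S (ltnSn #|S|) => // n IH S cardS clS.
have [S0|[v0 v0S]] := set_0Vmem (S :\ r).
  by apply: dist2_mv_halving_small; rewrite (cardsD1 r S) S0 cards0 addn0 leq_b1.
have [v /setD1P[vr vS] vmax] := arg_maxnP depth v0S.
have leaf y x : depth y = depth v -> x \in S -> x != r -> par x != y.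
  move=> yv xS xr; apply/eqP=> pxy.
  by have := vmax x (introT setD1P (conj xr xS)); rewrite (depth_par xr) pxy yv /= ltnn.
have remove a b : a \in S -> b \in S -> a != b -> dist2_mv_set e [set a; b] ->
    (forall x, x \in S :\: [set a; b] -> x != r -> par x \notin [set a; b]) ->
    dist2_mv_halving e S.
  move=> aS bS ab dab parAB; apply: (dist2_mv_halving_add_pair aS bS ab dab).
  apply: IH; last exact: parent_closedD.
  rewrite cardsDS ?subUset ?sub1set ?aS ?bS // cards2 ab.
  by move: cardS; rewrite (cardsD1 v S) vS; lia.
have pvS : par v \in S by apply: clS.
case: (pickP [pred w in S :\ r | (w != v) && (par w == par v)]) => [w|nosib].
  rewrite /= !inE => /andP[/andP[wr wS] /andP[wv /eqP pw]].
  have wdepth : depth w = depth v by rewrite (depth_par wr) (depth_par vr) pw.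
  apply: (remove v w) => //; first by rewrite eq_sym.
    apply: dist2_mv_set2 => //; right; exists (par v); first exact: par_edge.
    by rewrite -pw esym par_edge.
  move=> x /setDP[xS _] xr; rewrite !inE negb_or leaf // leaf //.
have vpv : v != par v by apply/eqP=> vE; have := par_edge vr; rewrite -vE eirr.
apply: (remove v (par v)) => //; first by apply: dist2_mv_set2 => //; left; apply: par_edge.
move=> x; rewrite !inE => /andP[/norP[xv _] xS] xr; rewrite negb_or leaf //=.
by apply/eqP=> pxv; have := nosib x; rewrite /= !inE xr xS xv pxv eqxx.
Qed.

End RootedTree.

Section BreadthFirstTree.
Variables (T : finType) (e : rel T) (r : T).
Hypothesis reach_r : forall x, connect e x r.

Fixpoint reaches_in k x : bool :=
  (x == r) || if k is k'.+1 then [exists y, e x y && reaches_in k' y] else false.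

Lemma reaches_in_path x p : path e x p -> last x p = r -> reaches_in (size p) x.
Proof.
elim: p x => [|y p IH] x /=; first by move=> _ ->; rewrite eqxx.
by case/andP=> exy yp yr; apply/orP; right; apply/existsP; exists y; rewrite exy IH.
Qed.

Lemma reaches_in_some x : exists k, reaches_in k x.
Proof.
by have /connectP[p xp pr] := reach_r x; exists (size p); apply: reaches_in_path.
Qed.

Definition bfs_depth x := ex_minn (reaches_in_some x).

Definition bfs_parent x := odflt x [pick y | e x y && reaches_in (bfs_depth x).-1 y].

Lemma bfs_parentP x :
  x != r -> e x (bfs_parent x) /\ bfs_depth x = (bfs_depth (bfs_parent x)).+1.
Proof.
move=> xr; rewrite /bfs_parent /bfs_depth.
case: ex_minnP => k xk kmin.
have k_gt0 : 0 < k by case: k xk {kmin} => //=; rewrite (negbTE xr).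
have [y /andP[exy yk]] : exists y, e x y && reaches_in k.-1 y.
  by move: xk; rewrite -(prednK k_gt0) /= (negbTE xr) => /existsP.
case: pickP => [z /andP[exz zk]|/(_ y)]; last by rewrite exy yk.
split=> //=; case: ex_minnP => m zm mmin.
have xm : reaches_in m.+1 x by rewrite /= (negbTE xr); apply/existsP; exists z; rewrite exz.
by have := kmin _ xm; have := mmin _ zk; lia.
Qed.

End BreadthFirstTree.

Lemma connected_dist2_mv_halving (T : finType) (e : rel T) :
  symmetric e -> irreflexive e -> connected_graph e -> dist2_mv_halving e [set: T].
Proof.
move=> esym eirr conn; case: (pickP (@predT T)) => [r _|T0].
  have reach_r x : connect e x r by apply: conn.
  apply: (@parent_closed_halving _ _ r (bfs_parent reach_r) (bfs_depth reach_r))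
    => // x xr.
  - exact: (bfs_parentP reach_r xr).1.
  - exact: (bfs_parentP reach_r xr).2.
by apply: dist2_mv_halving_small; rewrite cardsT eq_card0.
Qed.

Lemma chi_mu2_le_uphalf (T : finType) (e : rel T) :
  symmetric e -> irreflexive e -> connected_graph e -> chi_mu2 e <= uphalf #|T|.
Proof.
move=> esym eirr conn.
have [P [partP dP cardP]] := connected_dist2_mv_halving esym eirr conn.
by rewrite -cardsT; apply: leq_trans cardP; apply: chi_mu2_le_card.
Qed.

Section PathGraph.
Variable n : nat.

Definition path_graph : rel 'I_n := fun i j => (i.+1 == j) || (j.+1 == i).

Lemma path_graph_sym : symmetric path_graph.
Proof. by move=> i j; rewrite /path_graph orbC. Qed.

Lemma path_graph_irr : irreflexive path_graph.
Proof. by move=> i; rewrite /path_graph orbb; apply/negbTE; lia. Qed.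

Lemma path_graph_connected : connected_graph path_graph.
Proof.
have up k (i j : 'I_n) : j = i + k :> nat -> connect path_graph i j.
  elim: k j => [|k IH] j jE; first by rewrite (@ord_inj _ j i) // jE addn0.
  have ik : i + k < n by have := ltn_ord j; lia.
  apply: connect_trans (IH (Ordinal ik) erefl) (connect1 _).
  by rewrite /path_graph /= jE addnS eqxx.
move=> i j; have [ij|ji] := leqP i j; first by apply: (up (j - i)); lia.
by rewrite (sym_connect_sym path_graph_sym); apply: (up (i - j)); lia.
Qed.

Lemma path_graph_dist2_mv_span (M : {set 'I_n}) u v z :
  dist2_mv_set path_graph M -> u \in M -> v \in M -> z \in M ->
  v <= u + 2 /\ (v = u + 2 :> nat -> z <> u + 1 :> nat).
Proof.
move=> dM uM vM zM; have [p [[/andP[up /eqP pv] _] [size_p int_p]]] := dM u v uM vM.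
case: p up pv size_p int_p => [|x [|y []]] //=; rewrite /path_graph.
- by move=> _ <-; split; lia.
- by rewrite andbT => /orP[]/eqP ux <-; split; lia.
rewrite /internal /= !andbT => /andP[/orP[]/eqP ux /orP[]/eqP xy] <- _ xM;
  have zx : z <> x :> nat by move/ord_inj=> zx; rewrite -zx zM in xM.
all: by split; lia.
Qed.

Lemma path_graph_dist2_mv_card (M : {set 'I_n}) :
  dist2_mv_set path_graph M -> #|M| <= 2.
Proof.
move=> dM; rewrite leqNgt; apply/card_gt2P => -[a [b [c [[aM bM cM] [ab bc ca]]]]].
move: ab bc ca; rewrite -!(inj_eq val_inj) /= => /eqP ab /eqP bc /eqP ca.
have := path_graph_dist2_mv_span dM aM bM cM; have := path_graph_dist2_mv_span dM bM aM cM.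
have := path_graph_dist2_mv_span dM aM cM bM; have := path_graph_dist2_mv_span dM cM aM bM.
have := path_graph_dist2_mv_span dM bM cM aM; have := path_graph_dist2_mv_span dM cM bM aM.
lia.
Qed.

Lemma chi_mu2_path_graph : chi_mu2 path_graph = uphalf n.
Proof.
have le := chi_mu2_le_uphalf path_graph_sym path_graph_irr path_graph_connected.
have ge := uphalf_le_chi_mu2 path_graph_dist2_mv_card.
by rewrite card_ord in le ge; apply/eqP; rewrite eqn_leq le ge.
Qed.

End PathGraph.

Theorem theorem3p1 :
  (forall (T : finType) (e : rel T),
      symmetric e -> irreflexive e -> connected_graph e ->
      chi_mu2 e <= uphalf #|T|)
  /\
  (forall n : nat, 0 < n ->
      exists e : rel 'I_n,
        [/\ symmetric e, irreflexive e, connected_graph e &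
            chi_mu2 e = uphalf n]).
Proof.
split; first exact: chi_mu2_le_uphalf.
move=> n _; exists (@path_graph n); split.
- exact: path_graph_sym.
- exact: path_graph_irr.
- exact: path_graph_connected.
- exact: chi_mu2_path_graph.
Qed.
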